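(* Let $n\ge 2$ and $y=(y_1,\dots,y_{n-1},q)\in\mathbb C^n$. The following are equivalent (''for all $j$'' means for all $j=1,\dots,[n/2]$): (1) $y\in\widetilde\Gamma_n$; (2) $\binom{n}{j}-y_jz-y_{n-j}w+\binom{n}{j}qzw\neq 0$ for all $z,w\in\mathbb D$ and all $j$; (3) for all $j$: $\|\Phi_j(\cdot,y)\|_{H^\infty}\le 1$, and if $y_jy_{n-j}=\binom{n}{j}^2q$ then in addition $|y_{n-j}|\le\binom{n}{j}$; (3') for all $j$: $\|\Phi_{n-j}(\cdot,y)\|_{H^\infty}\le 1$, and if $y_jy_{n-j}=\binom{n}{j}^2q$ then in addition $|y_j|\le\binom{n}{j}$; (4) for all $j$: $\binom{n}{j}|y_j-\bar y_{n-j}q|+|y_jy_{n-j}-\binom{n}{j}^2q|\le\binom{n}{j}^2-|y_{n-j}|^2$, and if $y_jy_{n-j}=\binom{n}{j}^2q$ then in addition $|y_j|\le\binom{n}{j}$; (4') for all $j$: $\binom{n}{j}|y_{n-j}-\bar y_{j}q|+|y_jy_{n-j}-\binom{n}{j}^2q|\le\binom{n}{j}^2-|y_{j}|^2$, and if $y_jy_{n-j}=\binom{n}{j}^2q$ then in addition $|y_{n-j}|\le\binom{n}{j}$; (5) for all $j$: $|y_j|^2-|y_{n-j}|^2+\binom{n}{j}^2|q|^2+2\binom{n}{j}|y_{n-j}-\bar y_jq|\le\binom{n}{j}^2$ and $|y_{n-j}|\le\binom{n}{j}$; (5') for all $j$: $|y_{n-j}|^2-|y_{j}|^2+\binom{n}{j}^2|q|^2+2\binom{n}{j}|y_{j}-\bar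 y_{n-j}q|\le\binom{n}{j}^2$ and $|y_{j}|\le\binom{n}{j}$; (6) $|q|\le 1$ and $|y_j|^2+|y_{n-j}|^2-\binom{n}{j}^2|q|^2+2|y_jy_{n-j}-\binom{n}{j}^2q|\le\binom{n}{j}^2$ for all $j$; (7) $|y_{n-j}-\bar y_jq|+|y_j-\bar y_{n-j}q|\le\binom{n}{j}(1-|q|^2)$ for all $j$, and if $|q|=1$ then in addition $|y_j|\le\binom{n}{j}$ for all $j$; (8) there exist $2\times2$ matrices $B_1,\dots,B_{[n/2]}$ with $\|B_j\|\le 1$, $y_j=\binom{n}{j}[B_j]_{11}$, $y_{n-j}=\binom{n}{j}[B_j]_{22}$ for all $j$, and $\det B_1=\dots=\det B_{[n/2]}=q$; (9) the same as (8) with the $B_j$ additionally symmetric; (10) $|q|\le1$ and there exists $(\beta_1,\dots,\beta_{n-1})\in\mathbb C^{n-1}$ with $y_j=\beta_j+\bar\beta_{n-j}q$, $y_{n-j}=\beta_{n-j}+\bar\beta_jq$ and $|\beta_j|+|\beta_{n-j}|\le\binom{n}{j}$ for all $j$.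
   Context: $\mathbb D$ is the open unit disc, $[x]$ the integer part, $\|\cdot\|$ the operator norm. $\widetilde{\mathbb G}_n=\{(y_1,\dots,y_{n-1},q)\in\mathbb C^n: q\in\mathbb D,\ y_j=\beta_j+\bar\beta_{n-j}q$ for some $\beta_j\in\mathbb C$ with $|\beta_j|+|\beta_{n-j}|<\binom{n}{j}$, $j=1,\dots,n-1\}$, and $\widetilde\Gamma_n$ denotes its closure in $\mathbb C^n$. For $z\in\mathbb C$, $y=(y_1,\dots,y_{n-1},q)$ and $j\in\{1,\dots,n-1\}$: $\Phi_j(z,y)=\dfrac{\binom{n}{j}qz-y_j}{y_{n-j}z-\binom{n}{j}}$ if $y_{n-j}z\ne\binom{n}{j}$ and $y_jy_{n-j}\neq\binom{n}{j}^2q$, and $\Phi_j(z,y)=y_j/\binom{n}{j}$ if $y_jy_{n-j}=\binom{n}{j}^2q$; $\|\Phi_j(\cdot,y)\|_{H^\infty}=\sup_{z\in\mathbb D}|\Phi_j(z,y)|$, understood as $+\infty$ if $\Phi_j(\cdot,y)$ is undefined somewhere on $\mathbb D$ or unbounded there. *)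

From HB Require Import structures.
From mathcomp Require Import all_boot all_order all_algebra.
From mathcomp Require Import boolp classical_sets reals constructive_ereal ereal.
From mathcomp Require Import complex.
Set Implicit Arguments. Unset Strict Implicit. Unset Printing Implicit Defensive.
Import Order.TTheory GRing.Theory Num.Theory.
Local Open Scope ring_scope.

Section Defs.
Variable R : realType.
Local Notation C := R[i].
Local Notation normc := (@ComplexField.Normc.normc R).

Definition bin (n j : nat) : C := ('C(n, j))%:R.

Definition disc (z : C) : Prop := `|z| < 1.

(* A point y = (y_1,...,y_{n-1},q) of C^n is represented by ys : nat -> C
   (only the values ys 1, ..., ys (n-1) matter) together with q : C. *)

(* the open set \tilde G_n *)
Definition Gt (n : nat) (ys : nat -> C) (q : C) : Prop :=
  disc q /\
  exists beta : nat -> C, forall j, (1 <= j <= n.-1)%N ->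
    ys j = beta j + (beta (n - j)%N)^* * q /\
    `|beta j| + `|beta (n - j)%N| < bin n j.

(* its closure \tilde Gamma_n in C^n (written out with the max-norm metric) *)
Definition Gammat (n : nat) (ys : nat -> C) (q : C) : Prop :=
  forall e : R, 0 < e -> exists (ys' : nat -> C) (q' : C),
    Gt n ys' q' /\ normc (q - q') < e /\
    forall j, (1 <= j <= n.-1)%N -> normc (ys j - ys' j) < e.

(* Phi_j(z, y); None means "undefined" *)
Definition Phi (n j : nat) (ys : nat -> C) (q z : C) : option C :=
  let c := bin n j in
  let a := ys j in let b := ys (n - j)%N in
  if a * b == c ^+ 2 * q then Some (a / c)
  else if b * z != c then Some ((c * q * z - a) / (b * z - c))
  else None.

(* || Phi_j(., y) ||_{H^infty} = sup over the disc, +oo if undefined somewhere *)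
Definition Hinf_norm (n j : nat) (ys : nat -> C) (q : C) : \bar R :=
  if `[< forall z, disc z -> Phi n j ys q z <> None >] then
    ereal_sup [set (normc w)%:E | w in
       [set w | exists2 z, disc z & Phi n j ys q z = Some w]]
  else +oo%E.

Definition opnorm_le1 (B : 'M[C]_2) : Prop :=
  forall v : 'cV[C]_2,
    \sum_(i < 2) `|(B *m v) i 0| ^+ 2 <= \sum_(i < 2) `|v i 0| ^+ 2.

End Defs.
Arguments bin {R}.
Arguments disc {R}.
Arguments Gt {R}.
Arguments Gammat {R}.
Arguments Phi {R}.
Arguments Hinf_norm {R}.
Arguments opnorm_le1 {R}.

(* Fix j <= [n/2] and normalise: x1 = y_j / C(n,j), x2 = y_(n-j) / C(n,j),
   x3 = q.  Each condition of the theorem then says that every such triple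
   satisfies one of the characterisations of the closed tetrablock.  Conditions
   (4)-(7) are inequalities between the moduli |x1|, |x2|, |x3|, |x1 x2 - x3|,
   |x1 - x2^* x3| and |x2 - x1^* x3|, which are tied together by
     |x1 - x2^* x3|^2 - |x1 x2 - x3|^2 = (1 - |x2|^2) (|x1|^2 - |x3|^2),
   and (7) gives the parameters of (10) explicitly.  Under (6) the symmetric
   matrix with diagonal (x1, x2) and off-diagonal entry sqrt(x1 x2 - x3) is a
   contraction with determinant x3; for a contraction B the determinant
   det (1 - B diag(z, w)) = 1 - x1 z - x2 w + x3 z w cannot vanish on the
   bidisc, and this non-vanishing is equivalent to the Schur bound
   |x1 - x3 w| <= |1 - x2 w| on the disc, i.e. to (3), which gives (5) along a
   well chosen radius.  Finally the Schur bound is a closed condition that holds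
   on \tilde G_n, and shrinking the parameters of (10) by a factor t < 1 lands
   in \tilde G_n; together they identify \tilde Gamma_n. *)

From HB Require Import structures.
From mathcomp Require Import all_boot all_order all_algebra.
From mathcomp Require Import boolp classical_sets reals constructive_ereal ereal.
From mathcomp Require Import complex.
From mathcomp Require Import ring lra zify.
Set Implicit Arguments. Unset Strict Implicit. Unset Printing Implicit Defensive.
Import Order.TTheory GRing.Theory Num.Theory.
Local Open Scope ring_scope.

Section ComplexModulus.
Variable R : rcfType.
Local Open Scope complex_scope.
Local Open Scope ring_scope.
Local Notation C := R[i].
Local Notation normc := (@Normc.normc R).
Implicit Types (x y z : C) (a b : R).

Lemma normr_normc z : `|z| = (normc z)%:C.
Proof. by case: z. Qed.

Lemma normc_ge0 z : 0 <= normc z.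
Proof. by case: z => a b; apply: sqrtr_ge0. Qed.

Lemma normc_eq0 z : (normc z == 0) = (z == 0).
Proof. by rewrite -(inj_eq (@complexI R)) -normr_normc normr_eq0. Qed.

Lemma normc_gt0 z : (0 < normc z) = (z != 0).
Proof. by rewrite lt_def normc_eq0 normc_ge0 andbT. Qed.

Lemma normc_conj z : normc z^* = normc z.
Proof. by apply: (@complexI R); rewrite -!normr_normc norm_conjC. Qed.

Lemma normc_real a : normc a%:C = `|a|.
Proof. by rewrite /= expr0n /= addr0 sqrtr_sqr. Qed.

Lemma lerB_normc x y :
  normc x - normc y <= normc (x - y) /\ normc y - normc x <= normc (x - y).
Proof.
have := le_normcD (x - y) y; have := le_normcD (y - x) x.
by rewrite !subrK -opprB normcN; split; lra.
Qed.

Lemma ler_normc x y : (`|x| <= `|y|) = (normc x <= normc y).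
Proof. by rewrite !normr_normc lecR. Qed.

Lemma ltr_normc x y : (`|x| < `|y|) = (normc x < normc y).
Proof. by rewrite !normr_normc ltcR. Qed.

Lemma normc_le1 x : (`|x| <= 1) = (normc x <= 1).
Proof. by rewrite -normr1 ler_normc Normc.normc1. Qed.

Lemma normc_lt1 x : (`|x| < 1) = (normc x < 1).
Proof. by rewrite -normr1 ltr_normc Normc.normc1. Qed.

Lemma normc_eq1 x : (`|x| = 1) <-> (normc x = 1).
Proof. by rewrite normr_normc; split=> [[]|->]. Qed.

Lemma normc_complex_sqr a b : normc (a +i* b) ^+ 2 = a ^+ 2 + b ^+ 2.
Proof. by rewrite /= sqr_sqrtr // addr_ge0 // sqr_ge0. Qed.

Lemma conj_complex a b : (a +i* b)^* = a +i* (- b).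
Proof. by []. Qed.

Lemma conj_real a : (a%:C)^* = a%:C :> C.
Proof. by rewrite conj_complex oppr0. Qed.

Lemma tetra_identity x1 x2 x3 :
  normc (x1 - x2^* * x3) ^+ 2 - normc (x1 * x2 - x3) ^+ 2 =
  (1 - normc x2 ^+ 2) * (normc x1 ^+ 2 - normc x3 ^+ 2).
Proof.
case: x1 x2 x3 => [a1 b1] [a2 b2] [a3 b3].
by rewrite conj_complex; simpc; rewrite !normc_complex_sqr; ring.
Qed.

End ComplexModulus.

Section ModuliInequalities.
Variable R : realFieldType.

Lemma le_of_sqr_le (x y : R) : 0 <= y -> x ^+ 2 <= y ^+ 2 -> x <= y.
Proof. by move=> y0 xy; nra. Qed.

(* a, b, p, e, d1, d2 stand for |x1|, |x2|, |x3|, |x1 x2 - x3|, |x1 - x2^* x3|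
   and |x2 - x1^* x3|, see [tetra_moduli]. *)
Record moduli (a b p e d1 d2 : R) : Prop := Moduli {
  moduli_ge0 : [/\ 0 <= a, 0 <= b & 0 <= p];
  moduli_dist_ge0 : [/\ 0 <= e, 0 <= d1 & 0 <= d2];
  moduli_e : p - a * b <= e /\ a * b - p <= e;
  moduli_d1 : a - b * p <= d1 /\ b * p - a <= d1;
  moduli_d2 : b - a * p <= d2 /\ a * p - b <= d2;
  moduli_d1_sqr : d1 ^+ 2 - e ^+ 2 = (1 - b ^+ 2) * (a ^+ 2 - p ^+ 2);
  moduli_d2_sqr : d2 ^+ 2 - e ^+ 2 = (1 - a ^+ 2) * (b ^+ 2 - p ^+ 2) }.

Lemma moduli_sym (a b p e d1 d2 : R) : moduli a b p e d1 d2 -> moduli b a p e d2 d1.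
Proof.
move=> [[? ? ?] [? ? ?] [? ?] ? ? ? ?].
by split=> //; rewrite mulrC.
Qed.

Lemma moduli6_bounds (a b p e d1 d2 : R) : moduli a b p e d1 d2 ->
  p <= 1 -> a ^+ 2 + b ^+ 2 - p ^+ 2 + 2 * e <= 1 ->
  [/\ a - b <= 1 - p, b - a <= 1 - p & a + b <= 1 + p].
Proof.
move=> [[a0 b0 p0] [e0 _ _] [e1 e2] _ _ _ _] p1 h.
have sub : (a - b) ^+ 2 <= (1 - p) ^+ 2 by nra.
have add : (a + b) ^+ 2 <= (1 + p) ^+ 2 by nra.
split; apply: le_of_sqr_le; rewrite ?subr_ge0 ?addr_ge0 //; nra.
Qed.

Lemma moduli6_le1 (a b p e d1 d2 : R) : moduli a b p e d1 d2 ->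
  p <= 1 -> a ^+ 2 + b ^+ 2 - p ^+ 2 + 2 * e <= 1 -> a <= 1 /\ b <= 1.
Proof. by move=> hm p1 /(moduli6_bounds hm p1) [? ? ?]; split; lra. Qed.

(* Squaring reduces this to the bound 2e <= 1 - a^2 - b^2 + p^2 given by
   the hypothesis, via the identity for d2^2 - e^2. *)
Lemma moduli6_d2 (a b p e d1 d2 : R) : moduli a b p e d1 d2 ->
  p <= 1 -> a ^+ 2 + b ^+ 2 - p ^+ 2 + 2 * e <= 1 ->
  2 * d2 <= 1 - a ^+ 2 + b ^+ 2 - p ^+ 2.
Proof.
move=> hm p1 h; have [ab ba apb] := moduli6_bounds hm p1 h.
case: hm => [[a0 b0 p0] [e0 _ f0] _ _ _ _ hd2].
have pos : 0 <= 1 - a ^+ 2 + b ^+ 2 - p ^+ 2.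
  have [pb|bp] := lerP p b; first nra.
  have : a ^+ 2 <= (b + (1 - p)) ^+ 2 by nra.
  nra.
apply: le_of_sqr_le => //.
have e2 : (2 * e) ^+ 2 <= (1 - a ^+ 2 - b ^+ 2 + p ^+ 2) ^+ 2 by nra.
nra.
Qed.

Lemma moduli5_6 (a b p e d1 d2 : R) : moduli a b p e d1 d2 ->
  2 * d2 <= 1 - a ^+ 2 + b ^+ 2 - p ^+ 2 -> b <= 1 ->
  p <= 1 /\ a ^+ 2 + b ^+ 2 - p ^+ 2 + 2 * e <= 1.
Proof.
move=> [[a0 b0 p0] [e0 _ f0] _ _ [f1 f2] _ hd2] h b1.
have sub : (a - p) ^+ 2 <= (1 - b) ^+ 2 by nra.
have add : (a + p) ^+ 2 <= (1 + b) ^+ 2 by nra.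
have ap : a - p <= 1 - b by apply: le_of_sqr_le; lra.
have pa : p - a <= 1 - b by apply: le_of_sqr_le; [lra | nra].
have apb : a + p <= 1 + b by apply: le_of_sqr_le; lra.
have pos : 0 <= 1 - a ^+ 2 - b ^+ 2 + p ^+ 2.
  have [bp|bp] := lerP p b.
  - have : a ^+ 2 <= (1 - (b - p)) ^+ 2 by nra.
    nra.
  - have : a ^+ 2 <= (1 - (p - b)) ^+ 2 by nra.
    nra.
split; first lra.
suff : 2 * e <= 1 - a ^+ 2 - b ^+ 2 + p ^+ 2 by lra.
apply: le_of_sqr_le => //.
have d2sq : (2 * d2) ^+ 2 <= (1 - a ^+ 2 + b ^+ 2 - p ^+ 2) ^+ 2 by nra.
nra.
Qed.

Lemma moduli4_6 (a b p e d1 d2 : R) : moduli a b p e d1 d2 ->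
  d1 + e <= 1 - b ^+ 2 -> (e = 0 -> a <= 1) ->
  p <= 1 /\ a ^+ 2 + b ^+ 2 - p ^+ 2 + 2 * e <= 1.
Proof.
move=> [[a0 b0 p0] [e0 f0 _] [e1 e2] [f1 f2] _ hd1 _] h he.
have [b1|b1] := ltrP 0 (1 - b ^+ 2); last first.
  have E0 : e = 0 by nra.
  have -> : b = 1 by nra.
  have := he E0; rewrite E0 in e1 e2 *; nra.
have d1sq : d1 ^+ 2 <= (1 - b ^+ 2 - e) ^+ 2 by nra.
have : (1 - b ^+ 2) * (a ^+ 2 - p ^+ 2) <= (1 - b ^+ 2) * (1 - b ^+ 2 - 2 * e) by nra.
rewrite ler_pM2l // => ap.
have b1' : b < 1 by nra.
have : (p - a) * (1 + b) <= (1 - b) * (1 + b) by nra.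
rewrite ler_pM2r; last lra.
have : (a + p) * (1 - b) <= (1 + b) * (1 - b) by nra.
rewrite ler_pM2r; last lra.
split; lra.
Qed.

(* For p < 1, divide d1^2 - d2^2 = (a^2 - b^2)(1 - p^2) by 1 - p^2; for
   p = 1 the hypothesis forces d1 = d2 = 0, hence b = a. *)
Lemma moduli7_5 (a b p e d1 d2 : R) : moduli a b p e d1 d2 ->
  d1 + d2 <= 1 - p ^+ 2 -> (p = 1 -> a <= 1) ->
  2 * d2 <= 1 - a ^+ 2 + b ^+ 2 - p ^+ 2 /\ b <= 1.
Proof.
move=> [[a0 b0 p0] [e0 f0 g0] _ [f1 f2] [g1 g2] hd1 hd2] h ha.
have [p1|p1] := ltrP (p ^+ 2) 1; last first.
  have P1 : p = 1 by nra.
  rewrite P1 in f1 f2 g1 g2 h *; have := ha P1; nra.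
have T0 : 0 < 1 - p ^+ 2 by lra.
have diff : (d1 - d2) * (d1 + d2) = (a ^+ 2 - b ^+ 2) * (1 - p ^+ 2).
  have -> : (d1 - d2) * (d1 + d2) = (d1 ^+ 2 - e ^+ 2) - (d2 ^+ 2 - e ^+ 2) by ring.
  by rewrite hd1 hd2; ring.
have : (1 - p ^+ 2) * (2 * d2) <= (1 - p ^+ 2) * (1 - a ^+ 2 + b ^+ 2 - p ^+ 2) by nra.
rewrite ler_pM2l // => d2b; split=> //.
have p1' : p < 1 by nra.
have : (a + b) * (1 - p) <= (1 + p) * (1 - p) by nra.
rewrite ler_pM2r; last lra.
have : (b - a) * (1 + p) <= (1 - p) * (1 + p) by nra.
rewrite ler_pM2r; last lra.
lra.
Qed.

End ModuliInequalities.

Section Tetrablock.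
Variable R : rcfType.
Local Notation C := R[i].
Local Notation normc := (@Normc.normc R).

Ltac normc_to_real :=
  rewrite ?normr_normc -?lecR ?(rmorphXn, rmorphD, rmorphB, rmorphN, rmorphM,
                                rmorph1, rmorph_nat).

Lemma tetra_moduli (x1 x2 x3 : C) :
  moduli (normc x1) (normc x2) (normc x3) (normc (x1 * x2 - x3))
         (normc (x1 - x2^* * x3)) (normc (x2 - x1^* * x3)).
Proof.
split; rewrite ?normc_ge0 //.
- by rewrite -Normc.normcM; have [] := lerB_normc (x1 * x2) x3.
- by rewrite -(normc_conj x2) -Normc.normcM; exact: lerB_normc.
- by rewrite -(normc_conj x1) -Normc.normcM; exact: lerB_normc.
- exact: tetra_identity.
- by rewrite [x1 * x2]mulrC tetra_identity.
Qed.

(* Conditions (6), (4), (5), (7) and (10) for a normalised triple; the first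
   one is taken as the definition of the closed tetrablock. *)
Definition tetrablock (x1 x2 x3 : C) : Prop :=
  `|x3| <= 1 /\ `|x1| ^+ 2 + `|x2| ^+ 2 - `|x3| ^+ 2 + 2 * `|x1 * x2 - x3| <= 1.

Definition tetra4 (x1 x2 x3 : C) : Prop :=
  `|x1 - x2^* * x3| + `|x1 * x2 - x3| <= 1 - `|x2| ^+ 2 /\
  (x1 * x2 = x3 -> `|x1| <= 1).

Definition tetra5 (x1 x2 x3 : C) : Prop :=
  `|x1| ^+ 2 - `|x2| ^+ 2 + `|x3| ^+ 2 + 2 * `|x2 - x1^* * x3| <= 1 /\
  `|x2| <= 1.

Definition tetra7 (x1 x2 x3 : C) : Prop :=
  `|x2 - x1^* * x3| + `|x1 - x2^* * x3| <= 1 - `|x3| ^+ 2 /\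
  (`|x3| = 1 -> `|x1| <= 1).

Definition tetra_param (x1 x2 x3 : C) : Prop :=
  `|x3| <= 1 /\ exists b1 b2 : C,
    [/\ x1 = b1 + b2^* * x3, x2 = b2 + b1^* * x3 & `|b1| + `|b2| <= 1].

Lemma tetrablock_real (x1 x2 x3 : C) : tetrablock x1 x2 x3 <->
  normc x3 <= 1 /\
  normc x1 ^+ 2 + normc x2 ^+ 2 - normc x3 ^+ 2 + 2 * normc (x1 * x2 - x3) <= 1.
Proof. by rewrite /tetrablock; normc_to_real. Qed.

Lemma tetra4_real (x1 x2 x3 : C) : tetra4 x1 x2 x3 <->
  normc (x1 - x2^* * x3) + normc (x1 * x2 - x3) <= 1 - normc x2 ^+ 2 /\
  (normc (x1 * x2 - x3) = 0 -> normc x1 <= 1).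
Proof.
have e0 : (normc (x1 * x2 - x3) = 0) <-> (x1 * x2 = x3).
  split=> [/eqP | ->]; last by rewrite subrr Normc.normc0.
  by rewrite normc_eq0 subr_eq0 => /eqP.
by rewrite /tetra4 e0; normc_to_real.
Qed.

Lemma tetra5_real (x1 x2 x3 : C) : tetra5 x1 x2 x3 <->
  normc x1 ^+ 2 - normc x2 ^+ 2 + normc x3 ^+ 2 + 2 * normc (x2 - x1^* * x3) <= 1 /\
  normc x2 <= 1.
Proof. by rewrite /tetra5; normc_to_real. Qed.

Lemma tetra7_real (x1 x2 x3 : C) : tetra7 x1 x2 x3 <->
  normc (x2 - x1^* * x3) + normc (x1 - x2^* * x3) <= 1 - normc x3 ^+ 2 /\
  (normc x3 = 1 -> normc x1 <= 1).
Proof.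
by rewrite /tetra7 normc_eq1; normc_to_real; split=> -[h1 h2]; split=> //.
Qed.

Lemma tetrablockC (x1 x2 x3 : C) : tetrablock x1 x2 x3 <-> tetrablock x2 x1 x3.
Proof. by rewrite /tetrablock [x2 * x1]mulrC [`|x2| ^+ 2 + _]addrC. Qed.

Lemma tetrablock_normc_le1 (x1 x2 x3 : C) :
  tetrablock x1 x2 x3 -> normc x1 <= 1 /\ normc x2 <= 1.
Proof. by move=> /tetrablock_real [p1 h]; apply: moduli6_le1 (tetra_moduli _ _ _) p1 h. Qed.

Lemma tetrablock_dist (x1 x2 x3 : C) : tetrablock x1 x2 x3 ->
  2 * normc (x2 - x1^* * x3) <= 1 - normc x1 ^+ 2 + normc x2 ^+ 2 - normc x3 ^+ 2 /\
  2 * normc (x1 - x2^* * x3) <= 1 - normc x2 ^+ 2 + normc x1 ^+ 2 - normc x3 ^+ 2.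
Proof.
move=> h; have /tetrablock_real [p1 h12] := h.
have /tetrablockC/tetrablock_real [_ h21] := h.
have hm := tetra_moduli x1 x2 x3.
rewrite [x2 * x1]mulrC in h21.
by split; [apply: moduli6_d2 hm p1 h12 | apply: moduli6_d2 (moduli_sym hm) p1 h21].
Qed.

Lemma tetrablock_iff4 (x1 x2 x3 : C) : tetrablock x1 x2 x3 <-> tetra4 x1 x2 x3.
Proof.
split=> [h | /tetra4_real [h1 h2]]; last first.
  by apply/tetrablock_real; apply: moduli4_6 (tetra_moduli _ _ _) h1 h2.
have [[a1 _] [_ d1]] := (tetrablock_normc_le1 h, tetrablock_dist h).
have /tetrablock_real [_ h12] := h.
by apply/tetra4_real; split=> [|_ //]; lra.
Qed.

Lemma tetrablock_iff5 (x1 x2 x3 : C) : tetrablock x1 x2 x3 <-> tetra5 x1 x2 x3.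
Proof.
split=> [h | /tetra5_real [h1 h2]]; last first.
  by apply/tetrablock_real; apply: moduli5_6 (tetra_moduli _ _ _) _ h2; lra.
have [[_ b1] [d2 _]] := (tetrablock_normc_le1 h, tetrablock_dist h).
by apply/tetra5_real; split=> //; lra.
Qed.

Lemma tetra7_tetra5 (x1 x2 x3 : C) : tetra7 x1 x2 x3 -> tetra5 x1 x2 x3.
Proof.
move=> /tetra7_real [h1 h2]; apply/tetra5_real.
have [d2 b1] := moduli7_5 (tetra_moduli x1 x2 x3) (ltac:(lra)) h2.
by split=> //; lra.
Qed.

Lemma tetrablock_iff7 (x1 x2 x3 : C) : tetrablock x1 x2 x3 <-> tetra7 x1 x2 x3.
Proof.
split=> [h | /tetra7_tetra5/tetrablock_iff5 //].
have [[a1 _] [d2 d1]] := (tetrablock_normc_le1 h, tetrablock_dist h).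
by apply/tetra7_real; split=> [|_ //]; lra.
Qed.

End Tetrablock.

Section Parametrisation.
Variable R : rcfType.
Local Notation C := R[i].

(* When |x3| = 1, condition (7) forces x1 = x2^* x3, and halving x1 and x2
   gives a valid choice. *)
Definition param_beta (x1 x2 x3 : C) : C :=
  if `|x3| < 1 then (x1 - x2^* * x3) / (1 - `|x3| ^+ 2) else x1 / 2.

Lemma param_beta_disc (x1 x2 x3 : C) : `|x3| < 1 ->
  [/\ x1 = param_beta x1 x2 x3 + (param_beta x2 x1 x3)^* * x3,
      x2 = param_beta x2 x1 x3 + (param_beta x1 x2 x3)^* * x3 &
      `|param_beta x1 x2 x3| + `|param_beta x2 x1 x3|
        = (`|x1 - x2^* * x3| + `|x2 - x1^* * x3|) / (1 - `|x3| ^+ 2)].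
Proof.
move=> x3_lt1; rewrite /param_beta x3_lt1.
have T_gt0 : 0 < 1 - `|x3| ^+ 2 by rewrite subr_gt0 expr_lt1.
have T_neq0 : 1 - x3 * x3^* != 0 by rewrite -normCK gt_eqF.
split; last by rewrite !normrM normfV (ger0_norm (ltW T_gt0)) -mulrDl.
  all: rewrite normCK !(rmorphM, rmorphB, rmorph1, fmorphV) /= !conjCK.
  all: by rewrite [x3^* * x3]mulrC; field.
Qed.

Lemma param_beta_circle (x1 x2 x3 : C) : `|x3| = 1 ->
  x1 = x2^* * x3 -> x2 = x1^* * x3 ->
  [/\ x1 = param_beta x1 x2 x3 + (param_beta x2 x1 x3)^* * x3,
      x2 = param_beta x2 x1 x3 + (param_beta x1 x2 x3)^* * x3 &
      `|param_beta x1 x2 x3| + `|param_beta x2 x1 x3| = `|x1|].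
Proof.
move=> x3_1 e1 e2; rewrite /param_beta x3_1 ltxx /=.
have conj_half (x : C) : (x / 2)^* = x^* / 2.
  by rewrite rmorphM fmorphV /= rmorph_nat.
have n21 : `|x2| = `|x1| by rewrite e2 normrM norm_conjC x3_1 mulr1.
split; rewrite ?conj_half.
- by rewrite mulrAC -e1 -splitr.
- by rewrite mulrAC -e2 -splitr.
- by rewrite !normrM normfV (@ger0_norm _ 2) // n21 -splitr.
Qed.

Lemma tetra7_param (x1 x2 x3 : C) : tetra7 x1 x2 x3 ->
  [/\ x1 = param_beta x1 x2 x3 + (param_beta x2 x1 x3)^* * x3,
      x2 = param_beta x2 x1 x3 + (param_beta x1 x2 x3)^* * x3 &
      `|param_beta x1 x2 x3| + `|param_beta x2 x1 x3| <= 1].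
Proof.
move=> [h7 h1].
have x3_le1 : `|x3| <= 1.
  have : 0 <= 1 - `|x3| ^+ 2 by apply: le_trans h7; rewrite addr_ge0.
  by rewrite subr_ge0 expr_le1.
have [x3_lt1 | /negPf x3_nlt1] := boolP (`|x3| < 1).
  have [e1 e2 ->] := param_beta_disc x1 x2 x3_lt1.
  split; [exact: e1 | exact: e2 |].
  by rewrite ler_pdivrMr ?subr_gt0 ?expr_lt1 // mul1r addrC.
have /eqP x3_1 : `|x3| == 1 by move: x3_le1; rewrite le_eqVlt x3_nlt1 orbF.
have : `|x2 - x1^* * x3| + `|x1 - x2^* * x3| == 0.
  by rewrite eq_le addr_ge0 // andbT; rewrite x3_1 expr1n subrr in h7.
rewrite paddr_eq0 // !normr_eq0 !subr_eq0 => /andP[/eqP e2 /eqP e1].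
have [f1 f2 ->] := param_beta_circle x3_1 e1 e2.
by split; [exact: f1 | exact: f2 | exact: h1].
Qed.

Lemma tetra_param_tetra7 (x1 x2 x3 : C) : tetra_param x1 x2 x3 -> tetra7 x1 x2 x3.
Proof.
move=> [x3_le1 [b1 [b2 [-> -> hb]]]].
have T_ge0 : 0 <= 1 - `|x3| ^+ 2 by rewrite subr_ge0 expr_le1.
have reduce (u v : C) : u + v^* * x3 - (v + u^* * x3)^* * x3 = u * (1 - `|x3| ^+ 2).
  by rewrite normCK rmorphD rmorphM /= conjCK; ring.
split; first by rewrite !reduce !normrM (ger0_norm T_ge0) -mulrDl addrC ler_piMl.
move=> x3_1; apply: le_trans (ler_normD _ _) _.
by rewrite normrM norm_conjC x3_1 mulr1.
Qed.

Lemma tetrablock_iff10 (x1 x2 x3 : C) : tetrablock x1 x2 x3 <-> tetra_param x1 x2 x3.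
Proof.
split=> [h | /tetra_param_tetra7/tetrablock_iff7 //].
have [[x3_le1 _] /tetrablock_iff7/tetra7_param [e1 e2 hb]] := (h, h).
split; first exact: x3_le1.
exists (param_beta x1 x2 x3), (param_beta x2 x1 x3).
by split; [exact: e1 | exact: e2 | exact: hb].
Qed.

End Parametrisation.

Lemma sum_ord2 (V : nmodType) (F : 'I_2 -> V) : \sum_(i < 2) F i = F 0 + F 1.
Proof. by rewrite !big_ord_recl big_ord0 addr0; congr (_ + F _); apply: val_inj. Qed.

Lemma det_mx2 (T : comNzRingType) (A : 'M[T]_2) :
  \det A = A 0 0 * A 1 1 - A 0 1 * A 1 0.
Proof.
rewrite (expand_det_row _ 0) sum_ord2 /cofactor !det_mx11 !mxE /=.
have -> : lift 0 (0 : 'I_1) = 1 by apply: val_inj.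
have -> : lift 1 (0 : 'I_1) = 0 by apply: val_inj.
by rewrite expr0 expr1; ring.
Qed.

Section Contractions.
Variable R : realType.
Local Notation C := R[i].

(* |u|^2 = |B D u|^2 <= |D u|^2, while |d_k| < 1. *)
Lemma contraction_diag_fixed (B : 'M[C]_2) (d : 'rV[C]_2) (u : 'cV[C]_2) :
  opnorm_le1 B -> (forall k, `|d 0 k| < 1) -> B *m (diag_mx d *m u) = u -> u = 0.
Proof.
move=> hB hd hu; have := hB (diag_mx d *m u); rewrite hu => hle.
pose F k := (1 - `|d 0 k| ^+ 2) * `|u k 0| ^+ 2.
have F_ge0 k : 0 <= F k by rewrite mulr_ge0 // subr_ge0 ltW // expr_lt1.
have sumF : \sum_k F k = 0.
  apply/eqP; rewrite eq_le sumr_ge0 // andbT.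
  rewrite /F; under eq_bigr do rewrite mulrBl mul1r -exprMn -normrM.
  rewrite sumrB subr_le0.
  suff -> : \sum_k `|d 0 k * u k 0| ^+ 2 = \sum_k `|(diag_mx d *m u) k 0| ^+ 2 by [].
  by apply: eq_bigr => k _; rewrite mul_diag_mx mxE.
apply/matrixP => k j; rewrite ord1 mxE.
have /eqP : F k = 0 by apply: (psumr_eq0P (fun k _ => F_ge0 k) sumF).
by rewrite mulf_eq0 gt_eqF ?subr_gt0 ?expr_lt1 // sqrf_eq0 normr_eq0 => /eqP.
Qed.

Lemma contraction_nonvanishing (B : 'M[C]_2) : opnorm_le1 B ->
  forall z w : C, disc z -> disc w ->
  1 - B 0 0 * z - B 1 1 * w + \det B * z * w != 0.
Proof.
move=> hB z w hz hw; pose d : 'rV[C]_2 := \row_k (if k == 0 then z else w).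
have hd k : `|d 0 k| < 1 by rewrite mxE; case: ifP.
have detE : \det (1%:M - B *m diag_mx d) = 1 - B 0 0 * z - B 1 1 * w + \det B * z * w.
  by rewrite mul_mx_diag !det_mx2 !mxE /=; ring.
set M := 1%:M - B *m diag_mx d.
apply/negP; rewrite -detE -det_tr => /det0P [v v_neq0 hv].
have /eqP : M *m v^T = 0 by rewrite -(trmxK (M *m v^T)) trmx_mul trmxK hv trmx0.
rewrite mulmxBl mul1mx subr_eq0 -mulmxA => /eqP/esym/(contraction_diag_fixed hB hd).
by move=> vT0; move: v_neq0; rewrite -(inj_eq (@trmx_inj _ _ _)) vT0 trmx0 eqxx.
Qed.

End Contractions.

Lemma psd2_cross_le (R : realFieldType) (m11 m22 k v1 v2 : R) :
  0 <= m11 + m22 -> 0 <= k -> k ^+ 2 <= m11 * m22 -> 0 <= v1 -> 0 <= v2 ->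
  2 * (v1 * v2 * k) <= m11 * v1 ^+ 2 + m22 * v2 ^+ 2.
Proof.
move=> hs k0 hk v10 v20.
have m0 : 0 <= m11 * m22 by apply: le_trans hk; apply: sqr_ge0.
have [m1 m2] : 0 <= m11 /\ 0 <= m22 by split; nra.
apply: le_of_sqr_le; first by rewrite addr_ge0 // mulr_ge0 // sqr_ge0.
have : k ^+ 2 * (v1 ^+ 2 * v2 ^+ 2) <= m11 * m22 * (v1 ^+ 2 * v2 ^+ 2).
  by rewrite ler_wpM2r // mulr_ge0 // sqr_ge0.
by have := sqr_ge0 (m11 * v1 ^+ 2 - m22 * v2 ^+ 2); nra.
Qed.

Section SymmetricContraction.
Variable R : realType.
Local Notation C := R[i].
Local Notation normc := (@Normc.normc R).

Lemma Re_le_normc (z : C) : complex.Re z <= normc z.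
Proof. by have := normc_ge_Re z; rewrite normr_normc lecR; apply: le_trans (ler_norm _). Qed.

Lemma opnorm_le1P (B : 'M[C]_2) : opnorm_le1 B <-> forall v1 v2 : C,
  `|B 0 0 * v1 + B 0 1 * v2| ^+ 2 + `|B 1 0 * v1 + B 1 1 * v2| ^+ 2
    <= `|v1| ^+ 2 + `|v2| ^+ 2.
Proof.
split=> [hB v1 v2 | hB v].
  by have := hB (\col_i (if i == 0 then v1 else v2)); rewrite !sum_ord2 !mxE !sum_ord2 !mxE.
by have := hB (v 0 0) (v 1 0); rewrite !sum_ord2 !mxE !sum_ord2.
Qed.

Definition sym_mx2 (x1 x2 s : C) : 'M[C]_2 :=
  \matrix_(i, j) if i == j then (if i == 0 then x1 else x2) else s.

Lemma sym_mx2_quadratic (x1 x2 s v1 v2 : C) :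
  normc (x1 * v1 + s * v2) ^+ 2 + normc (s * v1 + x2 * v2) ^+ 2 =
  (normc x1 ^+ 2 + normc s ^+ 2) * normc v1 ^+ 2 +
  (normc s ^+ 2 + normc x2 ^+ 2) * normc v2 ^+ 2 +
  2 * complex.Re (v1 * v2^* * (x1 * s^* + s * x2^*)).
Proof.
case: x1 x2 s v1 v2 => [a1 b1] [a2 b2] [a3 b3] [a4 b4] [a5 b5].
by rewrite !conj_complex; simpc; rewrite !normc_complex_sqr /=; ring.
Qed.

Lemma sym_mx2_cross (x1 x2 s : C) :
  (normc x1 ^+ 2 + normc s ^+ 2) * (normc s ^+ 2 + normc x2 ^+ 2)
    - normc (x1 * s^* + s * x2^*) ^+ 2 = normc (x1 * x2 - s * s) ^+ 2.
Proof.
case: x1 x2 s => [a1 b1] [a2 b2] [a3 b3].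
by rewrite !conj_complex; simpc; rewrite !normc_complex_sqr /=; ring.
Qed.

(* m11, m22 and the modulus in the second hypothesis are the entries of
   1 - B^* B. *)
Lemma opnorm_le1_sym_mx2 (x1 x2 s : C) :
  let m11 := 1 - normc x1 ^+ 2 - normc s ^+ 2 in
  let m22 := 1 - normc x2 ^+ 2 - normc s ^+ 2 in
  0 <= m11 + m22 -> normc (x1 * s^* + s * x2^*) ^+ 2 <= m11 * m22 ->
  opnorm_le1 (sym_mx2 x1 x2 s).
Proof.
move=> m11 m22 hs hk; apply/opnorm_le1P => v1 v2; rewrite !mxE /=.
rewrite !normr_normc -!rmorphXn -!rmorphD lecR sym_mx2_quadratic.
have := Re_le_normc (v1 * v2^* * (x1 * s^* + s * x2^*)).
rewrite !Normc.normcM normc_conj.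
have := psd2_cross_le hs (normc_ge0 _) hk (normc_ge0 v1) (normc_ge0 v2).
rewrite /m11 /m22; lra.
Qed.

Lemma tetrablock_sym_contraction (x1 x2 x3 : C) : tetrablock x1 x2 x3 ->
  let B := sym_mx2 x1 x2 (sqrtC (x1 * x2 - x3)) in
  [/\ opnorm_le1 B, B^T = B, B 0 0 = x1, B 1 1 = x2 & \det B = x3].
Proof.
move=> h B; set s := sqrtC (x1 * x2 - x3).
have ss : s * s = x1 * x2 - x3 by rewrite -expr2 sqrtCK.
have [B00 B11 B01 B10] : [/\ B 0 0 = x1, B 1 1 = x2, B 0 1 = s & B 1 0 = s].
  by split; rewrite mxE.
split; [| | exact: B00 | exact: B11 |].
- have hS : normc s ^+ 2 = normc (x1 * x2 - x3) by rewrite expr2 -Normc.normcM ss.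
  have hK := sym_mx2_cross x1 x2 s.
  rewrite ss (_ : x1 * x2 - (x1 * x2 - x3) = x3) in hK; last by ring.
  have /tetrablock_real [p1 h6] := h.
  have p0 := normc_ge0 x3.
  by apply: opnorm_le1_sym_mx2; rewrite hS; nra.
- by apply/matrixP => i j; rewrite !mxE eq_sym; case: eqP => // ->.
- by rewrite det_mx2 B00 B11 B01 B10 ss; ring.
Qed.

End SymmetricContraction.

Lemma quadratic_ge0_at1 (R : realFieldType) (a d g : R) :
  (forall r, 0 <= r -> r < 1 -> 0 <= a - 2 * d * r + g * r ^+ 2) ->
  0 <= a - 2 * d + g.
Proof.
move=> h; apply/ler_addgt0Pr => e e0.
pose K := 2 * `|d| + 3 * `|g| + 1.
have K0 : 0 < K by rewrite /K; have := normr_ge0 d; have := normr_ge0 g; lra.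
pose t := e / (e + K).
have eK : 0 < e + K := addr_gt0 e0 K0.
have t0 : 0 < t by rewrite divr_gt0.
have t1 : t < 1 by rewrite ltr_pdivrMr // mul1r; lra.
have tK : t * K <= e by rewrite mulrAC ler_pdivrMr //; nra.
have := h (1 - t) (ltac:(lra)) (ltac:(lra)).
have -> : a - 2 * d * (1 - t) + g * (1 - t) ^+ 2
          = (a - 2 * d + g) + 2 * (d * t) - 2 * (g * t) + g * t ^+ 2 by ring.
have k1 : d * t <= `|d| * t := ler_wpM2r (ltW t0) (ler_norm d).
have k2 := ler_wpM2r (ltW t0) (ler_norm (- g)); rewrite normrN mulNr in k2.
have k3 : g * t ^+ 2 <= `|g| * t.
  apply: le_trans (ler_wpM2r (sqr_ge0 t) (ler_norm g)) _.
  have tt : t ^+ 2 <= t by rewrite expr2; exact: ler_piMl (ltW t0) (ltW t1).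
  by have := normr_ge0 g; nra.
have tK' : 2 * (`|d| * t) + 3 * (`|g| * t) + t <= e by move: tK; rewrite /K; nra.
lra.
Qed.

Section SchurCondition.
Variable R : realType.
Local Open Scope complex_scope.
Local Open Scope ring_scope.
Local Notation C := R[i].
Local Notation normc := (@Normc.normc R).

Definition tetra_nonvanishing (x1 x2 x3 : C) : Prop :=
  forall z w : C, disc z -> disc w -> 1 - x1 * z - x2 * w + x3 * z * w != 0.

Definition tetra_schur (x1 x2 x3 : C) : Prop :=
  `|x2| <= 1 /\ forall w : C, disc w -> `|x1 - x3 * w| <= `|1 - x2 * w|.

Lemma disc_mul_neq1 (x z : C) : `|x| <= 1 -> disc z -> x * z != 1.
Proof.
move=> x1 z1; have : `|x * z| < 1.
  by rewrite normrM; apply: le_lt_trans z1; rewrite ler_piMl.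
by apply: contraTneq => ->; rewrite normr1 ltxx.
Qed.

Lemma disc_inv (x : C) : 1 < normc x -> disc x^-1.
Proof. by move=> x1; rewrite /disc normc_lt1 Normc.normcV invf_lt1 //; lra. Qed.

Lemma nonvanishing_schur (x1 x2 x3 : C) :
  tetra_nonvanishing x1 x2 x3 -> tetra_schur x1 x2 x3.
Proof.
move=> h; have disc0 : disc (0 : C) by rewrite /disc normr0 ltr01.
split=> [|w hw].
  rewrite normc_le1 leNgt; apply/negP => x2_gt1.
  have x2_neq0 : x2 != 0 by rewrite -normc_gt0; lra.
  have := h 0 x2^-1 disc0 (disc_inv x2_gt1).
  by rewrite mulfV // !mulr0 mul0r !subr0 addr0 subrr eqxx.
rewrite ler_normc leNgt; apply/negP => hlt.
set u := x1 - x3 * w; have u_neq0 : u != 0.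
  by rewrite -normc_gt0; apply: le_lt_trans hlt; apply: normc_ge0.
have hz : disc ((1 - x2 * w) / u).
  by rewrite /disc normc_lt1 Normc.normcM Normc.normcV ltr_pdivrMr ?normc_gt0 ?mul1r.
have := h _ w hz hw; apply/negP; rewrite negbK.
have -> : 1 - x1 * ((1 - x2 * w) / u) - x2 * w + x3 * ((1 - x2 * w) / u) * w
          = (1 - x2 * w) - (1 - x2 * w) / u * u by rewrite /u; ring.
by rewrite divfK // subrr.
Qed.

Lemma schur_defect (x1 x2 x3 w : C) :
  normc (1 - x2 * w) ^+ 2 - normc (x1 - x3 * w) ^+ 2 =
  1 - normc x1 ^+ 2 - 2 * complex.Re ((x2 - x1^* * x3) * w)
    + (normc x2 ^+ 2 - normc x3 ^+ 2) * normc w ^+ 2.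
Proof.
case: x1 x2 x3 w => [a1 b1] [a2 b2] [a3 b3] [a4 b4].
by rewrite !conj_complex; simpc; rewrite !normc_complex_sqr /=; ring.
Qed.

Lemma Re_mul_real (z : C) (r : R) : complex.Re (z * r%:C) = complex.Re z * r.
Proof. by case: z => a b /=; ring. Qed.

(* Evaluate the Schur bound along the ray on which Re((x2 - x1^* x3) w) is
   maximal and let w tend to the boundary. *)
Lemma schur_tetra5 (x1 x2 x3 : C) : tetra_schur x1 x2 x3 -> tetra5 x1 x2 x3.
Proof.
move=> [x2_le1 hS]; apply/tetra5_real; rewrite -normc_le1; split=> //.
set u := x2 - x1^* * x3.
pose dir : C := if u == 0 then 1 else u^* / `|u|.
have dir1 : normc dir = 1.
  rewrite /dir; case: eqP => [_|/eqP u0]; first exact: Normc.normc1.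
  apply: (@complexI R); rewrite -normr_normc normrM normfV normr_id norm_conjC.
  by rewrite divff ?normr_eq0.
have Re_dir : complex.Re (u * dir) = normc u.
  rewrite /dir; case: eqP => [->|/eqP u0]; first by rewrite mul0r Normc.normc0.
  by rewrite mulrA -normCK expr2 mulfK ?normr_eq0 // normr_normc.
suff : 0 <= (1 - normc x1 ^+ 2) - 2 * normc u + (normc x2 ^+ 2 - normc x3 ^+ 2).
  by lra.
apply: quadratic_ge0_at1 => r r0 r1.
have hw : disc (dir * r%:C).
  by rewrite /disc normc_lt1 Normc.normcM dir1 mul1r normc_real ger0_norm.
have := hS _ hw; rewrite ler_normc => hle.
have := schur_defect x1 x2 x3 (dir * r%:C).
rewrite -/u [u * _]mulrA Re_mul_real Re_dir Normc.normcM dir1 mul1r normc_real ger0_norm //.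
have : normc (x1 - x3 * (dir * r%:C)) ^+ 2 <= normc (1 - x2 * (dir * r%:C)) ^+ 2.
  by rewrite ler_sqr ?nnegrE ?normc_ge0.
lra.
Qed.

End SchurCondition.

Section HinfNorm.
Variable R : realType.
Local Notation C := R[i].
Local Notation normc := (@Normc.normc R).

Definition tetra_phi (x1 x2 x3 z : C) : option C :=
  if x1 * x2 == x3 then Some x1
  else if x2 * z != 1 then Some ((x3 * z - x1) / (x2 * z - 1)) else None.

Definition tetra_hinf (x1 x2 x3 : C) : \bar R :=
  if `[< forall z, disc z -> tetra_phi x1 x2 x3 z <> None >] then
    ereal_sup [set (normc w)%:E | w in
       [set w | exists2 z, disc z & tetra_phi x1 x2 x3 z = Some w]]
  else +oo%E.

Definition tetra3 (x1 x2 x3 : C) : Prop :=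
  (tetra_hinf x1 x2 x3 <= 1)%E /\ (x1 * x2 = x3 -> `|x2| <= 1).

Lemma normc_mobius_le1 (x1 x2 x3 z : C) : x2 * z != 1 ->
  (normc ((x3 * z - x1) / (x2 * z - 1)) <= 1) = (`|x1 - x3 * z| <= `|1 - x2 * z|).
Proof.
move=> hz; have nz : x2 * z - 1 != 0 by rewrite subr_eq0.
rewrite Normc.normcM Normc.normcV ler_pdivrMr ?normc_gt0 // mul1r ler_normc.
by rewrite -(normcN (x3 * z - x1)) -(normcN (x2 * z - 1)) !opprB.
Qed.

Lemma schur_tetra3 (x1 x2 x3 : C) : tetra_schur x1 x2 x3 -> tetra3 x1 x2 x3.
Proof.
move=> [x2_le1 hS]; split; last by move=> _.
have x2z z : disc z -> x2 * z != 1 := disc_mul_neq1 x2_le1.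
rewrite /tetra_hinf asboolT => [|z hz]; last first.
  by rewrite /tetra_phi; case: ifP => // _; rewrite x2z.
apply: ge_ereal_sup => _ [w [z hz]] + <-; rewrite lee_fin /tetra_phi.
case: ifP => [_ [<-] | _].
  by have := hS 0; rewrite /disc normr0 ltr01 !mulr0 !subr0 normr1 normc_le1; apply.
by rewrite x2z // => -[<-]; rewrite normc_mobius_le1 ?x2z //; apply: hS.
Qed.

Lemma tetra3_schur (x1 x2 x3 : C) : tetra3 x1 x2 x3 -> tetra_schur x1 x2 x3.
Proof.
move=> [+ h12]; rewrite /tetra_hinf; case: asboolP => [defined|//] hsup.
have hub z w : disc z -> tetra_phi x1 x2 x3 z = Some w -> normc w <= 1.
  move=> hz hw; rewrite -lee_fin; apply: le_trans hsup.
  by apply: ereal_sup_ubound; exists w => //; exists z.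
have [deg | ndeg] := eqVneq (x1 * x2) x3.
  have x1_le1 : normc x1 <= 1.
    by apply: (hub 0); rewrite /disc ?normr0 ?ltr01 // /tetra_phi deg eqxx.
  split=> [|w _]; first exact: h12.
  rewrite -deg (_ : x1 - x1 * x2 * w = x1 * (1 - x2 * w)); last by ring.
  by rewrite normrM ler_piMl // normc_le1.
have x2_le1 : `|x2| <= 1.
  rewrite normc_le1 leNgt; apply/negP => x2_gt1.
  have x2_neq0 : x2 != 0 by rewrite -normc_gt0; lra.
  by apply: (defined _ (disc_inv x2_gt1)); rewrite /tetra_phi (negbTE ndeg) mulfV // eqxx.
split=> // w hw; have x2w := disc_mul_neq1 x2_le1 hw.
by rewrite -normc_mobius_le1 //; apply: (hub w) => //; rewrite /tetra_phi (negbTE ndeg) x2w.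
Qed.

Lemma tetrablock_nonvanishing (x1 x2 x3 : C) :
  tetrablock x1 x2 x3 -> tetra_nonvanishing x1 x2 x3.
Proof.
move=> /tetrablock_sym_contraction [hB _ B00 B11 detB] z w hz hw.
by have := contraction_nonvanishing hB hz hw; rewrite B00 B11 detB.
Qed.

Lemma tetrablock_iff_nonvanishing (x1 x2 x3 : C) :
  tetrablock x1 x2 x3 <-> tetra_nonvanishing x1 x2 x3.
Proof.
split; first exact: tetrablock_nonvanishing.
by move=> /nonvanishing_schur/schur_tetra5/tetrablock_iff5.
Qed.

Lemma tetrablock_iff3 (x1 x2 x3 : C) : tetrablock x1 x2 x3 <-> tetra3 x1 x2 x3.
Proof.
split; first by move=> /tetrablock_nonvanishing/nonvanishing_schur/schur_tetra3.
by move=> /tetra3_schur/schur_tetra5/tetrablock_iff5.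
Qed.

End HinfNorm.

Section Scaling.
Variable R : realType.
Local Notation C := R[i].
Variable c : C.
Hypothesis c_gt0 : 0 < c.

Let c_neq0 : c != 0 := lt0r_neq0 c_gt0.

Lemma normr_scale (x : C) : `|c * x| = c * `|x|.
Proof. by rewrite normrM gtr0_norm. Qed.

Lemma normr_scale2 (x : C) : `|c ^+ 2 * x| = c ^+ 2 * `|x|.
Proof. by rewrite normrM normrX gtr0_norm. Qed.

Lemma conj_scale (x : C) : (c * x)^* = c * x^*.
Proof. by rewrite rmorphM /= conj_Creal ?gtr0_real. Qed.

Lemma scale_le (x : C) : (`|c * x| <= c) = (`|x| <= 1).
Proof. by rewrite normr_scale -{2}[c]mulr1 ler_pM2l. Qed.

Lemma scale_prod_eq (x1 x2 q : C) :
  (c * x1 * (c * x2) = c ^+ 2 * q) <-> (x1 * x2 = q).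
Proof.
have -> : c * x1 * (c * x2) = c ^+ 2 * (x1 * x2) by ring.
by split=> [/(mulfI (expf_neq0 2 c_neq0)) | ->].
Qed.

Lemma scale_nonvanishing (x1 x2 q : C) :
  (forall z w : C, disc z -> disc w ->
     c - c * x1 * z - c * x2 * w + c * q * z * w != 0) <->
  tetra_nonvanishing x1 x2 q.
Proof.
have e z w : c - c * x1 * z - c * x2 * w + c * q * z * w
           = c * (1 - x1 * z - x2 * w + q * z * w) by ring.
by split=> h z w hz hw; have := h z w hz hw; rewrite e mulf_eq0 negb_or c_neq0.
Qed.

Lemma scale4 (x1 x2 q : C) :
  (c * `|c * x1 - (c * x2)^* * q| + `|c * x1 * (c * x2) - c ^+ 2 * q|
       <= c ^+ 2 - `|c * x2| ^+ 2 /\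
   (c * x1 * (c * x2) = c ^+ 2 * q -> `|c * x1| <= c)) <-> tetra4 x1 x2 q.
Proof.
rewrite scale_le conj_scale scale_prod_eq.
have -> : c * x1 - c * x2^* * q = c * (x1 - x2^* * q) by ring.
have -> : c * x1 * (c * x2) - c ^+ 2 * q = c ^+ 2 * (x1 * x2 - q) by ring.
rewrite normr_scale2 !normr_scale.
have -> : c * (c * `|x1 - x2^* * q|) + c ^+ 2 * `|x1 * x2 - q|
          = c ^+ 2 * (`|x1 - x2^* * q| + `|x1 * x2 - q|) by ring.
have -> : c ^+ 2 - (c * `|x2|) ^+ 2 = c ^+ 2 * (1 - `|x2| ^+ 2) by ring.
by rewrite ler_pM2l ?exprn_gt0.
Qed.

Lemma scale5 (x1 x2 q : C) :
  (`|c * x1| ^+ 2 - `|c * x2| ^+ 2 + c ^+ 2 * `|q| ^+ 2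
       + 2 * c * `|c * x2 - (c * x1)^* * q| <= c ^+ 2 /\
   `|c * x2| <= c) <-> tetra5 x1 x2 q.
Proof.
rewrite scale_le conj_scale.
have -> : c * x2 - c * x1^* * q = c * (x2 - x1^* * q) by ring.
rewrite !normr_scale.
have -> : (c * `|x1|) ^+ 2 - (c * `|x2|) ^+ 2 + c ^+ 2 * `|q| ^+ 2
            + 2 * c * (c * `|x2 - x1^* * q|)
          = c ^+ 2 * (`|x1| ^+ 2 - `|x2| ^+ 2 + `|q| ^+ 2 + 2 * `|x2 - x1^* * q|).
  by ring.
by rewrite -{2}[c ^+ 2]mulr1 ler_pM2l ?exprn_gt0.
Qed.

Lemma scale6 (x1 x2 q : C) :
  (`|c * x1| ^+ 2 + `|c * x2| ^+ 2 - c ^+ 2 * `|q| ^+ 2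
       + 2 * `|c * x1 * (c * x2) - c ^+ 2 * q| <= c ^+ 2) =
  (`|x1| ^+ 2 + `|x2| ^+ 2 - `|q| ^+ 2 + 2 * `|x1 * x2 - q| <= 1).
Proof.
have -> : c * x1 * (c * x2) - c ^+ 2 * q = c ^+ 2 * (x1 * x2 - q) by ring.
rewrite normr_scale2 !normr_scale.
have -> : (c * `|x1|) ^+ 2 + (c * `|x2|) ^+ 2 - c ^+ 2 * `|q| ^+ 2
            + 2 * (c ^+ 2 * `|x1 * x2 - q|)
          = c ^+ 2 * (`|x1| ^+ 2 + `|x2| ^+ 2 - `|q| ^+ 2 + 2 * `|x1 * x2 - q|).
  by ring.
by rewrite -{2}[c ^+ 2]mulr1 ler_pM2l ?exprn_gt0.
Qed.

Lemma scale7 (x1 x2 q : C) :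
  (`|c * x2 - (c * x1)^* * q| + `|c * x1 - (c * x2)^* * q| <= c * (1 - `|q| ^+ 2)) =
  (`|x2 - x1^* * q| + `|x1 - x2^* * q| <= 1 - `|q| ^+ 2).
Proof.
rewrite !conj_scale.
have -> : c * x2 - c * x1^* * q = c * (x2 - x1^* * q) by ring.
have -> : c * x1 - c * x2^* * q = c * (x1 - x2^* * q) by ring.
by rewrite !normr_scale -mulrDr ler_pM2l.
Qed.

End Scaling.

Section NormalisedPairs.
Variable R : realType.
Local Open Scope complex_scope.
Local Open Scope ring_scope.
Local Notation C := R[i].
Variables (n : nat) (ys : nat -> C) (q : C).

Definition x1_at (j : nat) : C := ys j / bin n j.
Definition x2_at (j : nat) : C := ys (n - j)%N / bin n j.

Definition tetra_pairs : Prop :=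
  forall j, (1 <= j <= n./2)%N -> tetrablock (x1_at j) (x2_at j) q.

Lemma le_half_n j : (1 <= j <= n./2)%N -> (j <= n)%N.
Proof. by case/andP; lia. Qed.

Lemma bin_gt0C j : (j <= n)%N -> 0 < bin n j :> C.
Proof. by move=> hj; rewrite ltr0n bin_gt0. Qed.

Lemma bin_neq0 j : (j <= n)%N -> bin n j != 0 :> C.
Proof. by move=> /bin_gt0C/lt0r_neq0. Qed.

Lemma ys_scaled j : (j <= n)%N ->
  ys j = bin n j * x1_at j /\ ys (n - j)%N = bin n j * x2_at j.
Proof.
by move=> /bin_neq0 hc; rewrite /x1_at /x2_at ![bin n j * _]mulrC !divfK.
Qed.

Lemma bin_sub_n j : (j <= n)%N -> bin n (n - j) = bin n j :> C.
Proof. by move=> hj; rewrite /bin bin_sub. Qed.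

Lemma x_at_sub j : (j <= n)%N -> x1_at (n - j) = x2_at j /\ x2_at (n - j) = x1_at j.
Proof. by move=> hj; rewrite /x1_at /x2_at bin_sub_n // subKn. Qed.

Lemma tetra_pairsP (P : nat -> Prop) :
  (forall j, (1 <= j <= n./2)%N -> P j <-> tetrablock (x1_at j) (x2_at j) q) ->
  (forall j, (1 <= j <= n./2)%N -> P j) <-> tetra_pairs.
Proof. by move=> hP; split=> h j hj; apply/(hP j hj)/h. Qed.

Lemma Phi_scaled j z : (j <= n)%N ->
  Phi n j ys q z = tetra_phi (x1_at j) (x2_at j) q z.
Proof.
move=> hj; have c_neq0 := bin_neq0 hj.
rewrite /Phi /tetra_phi /=; have [-> ->] := ys_scaled hj.
set c := bin n j; set a := x1_at j; set b := x2_at j.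
have -> : (c * a * (c * b) == c ^+ 2 * q) = (a * b == q).
  rewrite (_ : c * a * (c * b) = c ^+ 2 * (a * b)); last by ring.
  by rewrite (inj_eq (mulfI _)) // expf_neq0.
case: eqP => _; first by rewrite mulrC mulKf.
have -> : (c * b * z != c) = (b * z != 1).
  by rewrite -mulrA -{2}[c]mulr1 (inj_eq (mulfI c_neq0)).
case: ifP => // _; congr Some.
rewrite (_ : c * q * z - c * a = c * (q * z - a)); last by ring.
rewrite (_ : c * b * z - c = c * (b * z - 1)); last by ring.
by rewrite invfM mulrACA divff // mul1r.
Qed.

Lemma Hinf_norm_scaled j : (j <= n)%N ->
  Hinf_norm n j ys q = tetra_hinf (x1_at j) (x2_at j) q.
Proof.
move=> hj; rewrite /Hinf_norm /tetra_hinf.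
by rewrite (_ : Phi n j ys q = tetra_phi (x1_at j) (x2_at j) q) // funeqE => z; apply: Phi_scaled.
Qed.

Lemma pair_iff2 j : (1 <= j <= n./2)%N ->
  (forall z w : C, disc z -> disc w ->
     bin n j - ys j * z - ys (n - j)%N * w + bin n j * q * z * w != 0) <->
  tetrablock (x1_at j) (x2_at j) q.
Proof.
move=> /le_half_n hj; have [-> ->] := ys_scaled hj.
by rewrite (scale_nonvanishing (bin_gt0C hj)) tetrablock_iff_nonvanishing.
Qed.

Lemma pair_iff3 j : (1 <= j <= n./2)%N ->
  ((Hinf_norm n j ys q <= 1)%E /\
   (ys j * ys (n - j)%N = bin n j ^+ 2 * q -> `|ys (n - j)%N| <= bin n j)) <->
  tetrablock (x1_at j) (x2_at j) q.
Proof.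
move=> /le_half_n hj; have hc := bin_gt0C hj.
by rewrite Hinf_norm_scaled //; have [-> ->] := ys_scaled hj;
  rewrite (scale_prod_eq hc) (scale_le hc) tetrablock_iff3.
Qed.

Lemma pair_iff3' j : (1 <= j <= n./2)%N ->
  ((Hinf_norm n (n - j) ys q <= 1)%E /\
   (ys j * ys (n - j)%N = bin n j ^+ 2 * q -> `|ys j| <= bin n j)) <->
  tetrablock (x1_at j) (x2_at j) q.
Proof.
move=> /le_half_n hj; have hc := bin_gt0C hj; have [s1 s2] := x_at_sub hj.
rewrite Hinf_norm_scaled ?leq_subr // s1 s2 [ys j * _]mulrC.
by have [-> ->] := ys_scaled hj;
  rewrite (scale_prod_eq hc) (scale_le hc) tetrablockC tetrablock_iff3.
Qed.

Lemma pair_iff4 j : (1 <= j <= n./2)%N ->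
  (bin n j * `|ys j - (ys (n - j)%N)^* * q| + `|ys j * ys (n - j)%N - bin n j ^+ 2 * q|
     <= bin n j ^+ 2 - `|ys (n - j)%N| ^+ 2 /\
   (ys j * ys (n - j)%N = bin n j ^+ 2 * q -> `|ys j| <= bin n j)) <->
  tetrablock (x1_at j) (x2_at j) q.
Proof.
move=> /le_half_n hj; have [-> ->] := ys_scaled hj.
by rewrite (scale4 (bin_gt0C hj)) tetrablock_iff4.
Qed.

Lemma pair_iff4' j : (1 <= j <= n./2)%N ->
  (bin n j * `|ys (n - j)%N - (ys j)^* * q| + `|ys j * ys (n - j)%N - bin n j ^+ 2 * q|
     <= bin n j ^+ 2 - `|ys j| ^+ 2 /\
   (ys j * ys (n - j)%N = bin n j ^+ 2 * q -> `|ys (n - j)%N| <= bin n j)) <->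
  tetrablock (x1_at j) (x2_at j) q.
Proof.
move=> /le_half_n hj; rewrite [ys j * _]mulrC; have [-> ->] := ys_scaled hj.
by rewrite (scale4 (bin_gt0C hj)) tetrablockC tetrablock_iff4.
Qed.

Lemma pair_iff5 j : (1 <= j <= n./2)%N ->
  (`|ys j| ^+ 2 - `|ys (n - j)%N| ^+ 2 + bin n j ^+ 2 * `|q| ^+ 2
     + 2 * bin n j * `|ys (n - j)%N - (ys j)^* * q| <= bin n j ^+ 2 /\
   `|ys (n - j)%N| <= bin n j) <->
  tetrablock (x1_at j) (x2_at j) q.
Proof.
move=> /le_half_n hj; have [-> ->] := ys_scaled hj.
by rewrite (scale5 (bin_gt0C hj)) tetrablock_iff5.
Qed.

Lemma pair_iff5' j : (1 <= j <= n./2)%N ->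
  (`|ys (n - j)%N| ^+ 2 - `|ys j| ^+ 2 + bin n j ^+ 2 * `|q| ^+ 2
     + 2 * bin n j * `|ys j - (ys (n - j)%N)^* * q| <= bin n j ^+ 2 /\
   `|ys j| <= bin n j) <->
  tetrablock (x1_at j) (x2_at j) q.
Proof.
move=> /le_half_n hj; have [-> ->] := ys_scaled hj.
by rewrite (scale5 (bin_gt0C hj)) tetrablockC tetrablock_iff5.
Qed.

Lemma param_all_indices (beta : nat -> C) :
  (forall j, (1 <= j <= n./2)%N ->
     [/\ ys j = beta j + (beta (n - j)%N)^* * q,
         ys (n - j)%N = beta (n - j)%N + (beta j)^* * q &
         `|beta j| + `|beta (n - j)%N| <= bin n j]) ->
  forall j, (1 <= j <= n.-1)%N ->
    ys j = beta j + (beta (n - j)%N)^* * q /\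
    `|beta j| + `|beta (n - j)%N| <= bin n j.
Proof.
move=> hb j /andP[j1 jn]; have [jh | hj] := leqP j n./2.
  by have [e1 _ e3] := hb j (ltac:(apply/andP; split => //)).
have hk : (1 <= n - j <= n./2)%N by apply/andP; split; lia.
have [_ e2 e3] := hb _ hk; rewrite subKn in e2 e3; last lia.
split; first exact: e2.
by rewrite addrC -bin_sub_n //; lia.
Qed.

Lemma Gt_shrink (beta : nat -> C) (t : R) : 0 < t < 1 -> `|q| <= 1 ->
  (forall j, (1 <= j <= n.-1)%N -> `|beta j| + `|beta (n - j)%N| <= bin n j) ->
  Gt n (fun k => t%:C * beta k + (t%:C * beta (n - k)%N)^* * (t%:C * q)) (t%:C * q).
Proof.
case/andP=> t0 t1 q1 hb; have tC0 : 0 < t%:C :> C by rewrite ltcR.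
split.
  rewrite /disc normc_lt1 Normc.normcM normc_real gtr0_norm //.
  by rewrite normc_le1 in q1; have := normc_ge0 q; nra.
exists (fun k => t%:C * beta k) => j hj; split=> //.
rewrite !normrM gtr0_norm // -mulrDr.
apply: le_lt_trans (ler_wpM2l (ltW tC0) (hb j hj)) _.
by rewrite gtr_pMl ?ltcR // bin_gt0C //; case/andP: hj; lia.
Qed.

Lemma pairs_iff7 :
  ((forall j, (1 <= j <= n./2)%N ->
     `|ys (n - j)%N - (ys j)^* * q| + `|ys j - (ys (n - j)%N)^* * q|
       <= bin n j * (1 - `|q| ^+ 2)) /\
   (`|q| = 1 -> forall j, (1 <= j <= n./2)%N -> `|ys j| <= bin n j)) <->
  tetra_pairs.
Proof.
split=> [[h1 h2] j hj | h].
  apply/tetrablock_iff7; have hjn := le_half_n hj; have hc := bin_gt0C hjn.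
  have [e1 e2] := ys_scaled hjn; split.
    by have := h1 j hj; rewrite e1 e2 (scale7 hc).
  by move=> q1; have := h2 q1 j hj; rewrite e1 (scale_le hc).
have h7 j (hj : (1 <= j <= n./2)%N) : tetra7 (x1_at j) (x2_at j) q.
  exact/tetrablock_iff7/h.
split=> [j hj | q1 j hj]; have hjn := le_half_n hj; have hc := bin_gt0C hjn;
  have [e1 e2] := ys_scaled hjn.
  by rewrite e1 e2 (scale7 hc); case: (h7 j hj).
by rewrite e1 (scale_le hc); case: (h7 j hj) => _; apply.
Qed.

Definition pair_matrix j : 'M[C]_2 :=
  sym_mx2 (x1_at j) (x2_at j) (sqrtC (x1_at j * x2_at j - q)).

Lemma pairs_sym_contraction j : tetra_pairs -> (1 <= j <= n./2)%N ->
  [/\ opnorm_le1 (pair_matrix j), (pair_matrix j)^T = pair_matrix j,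
      ys j = bin n j * pair_matrix j 0 0, ys (n - j)%N = bin n j * pair_matrix j 1 1
    & \det (pair_matrix j) = q].
Proof.
move=> h hj; have [e1 e2] := ys_scaled (le_half_n hj).
have [hB hT B00 B11 hdet] := tetrablock_sym_contraction (h j hj).
by split; [exact: hB | exact: hT | rewrite B00 | rewrite B11 | exact: hdet].
Qed.

Lemma contraction_pair j (B : 'M[C]_2) : (1 <= j <= n./2)%N -> opnorm_le1 B ->
  ys j = bin n j * B 0 0 -> ys (n - j)%N = bin n j * B 1 1 -> \det B = q ->
  tetrablock (x1_at j) (x2_at j) q.
Proof.
move=> /le_half_n hj hB e1 e2 hdet; have [f1 f2] := ys_scaled hj.
have -> : x1_at j = B 0 0 by apply: (mulfI (bin_neq0 hj)); rewrite -f1 -e1.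
have -> : x2_at j = B 1 1 by apply: (mulfI (bin_neq0 hj)); rewrite -f2 -e2.
by apply/tetrablock_iff_nonvanishing; rewrite -hdet; apply: contraction_nonvanishing.
Qed.

Lemma pairs_iff8 :
  (exists B : nat -> 'M[C]_2, forall j, (1 <= j <= n./2)%N ->
     [/\ opnorm_le1 (B j), ys j = bin n j * B j 0 0,
         ys (n - j)%N = bin n j * B j 1 1 & \det (B j) = q]) <-> tetra_pairs.
Proof.
split=> [[B hB] j hj | h]; first by have [] := hB j hj; exact: contraction_pair.
exists pair_matrix => j hj; have [h1 _ h3 h4 h5] := pairs_sym_contraction h hj.
exact: And4 h1 h3 h4 h5.
Qed.

Lemma pairs_iff9 :
  (exists B : nat -> 'M[C]_2, forall j, (1 <= j <= n./2)%N ->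
     [/\ opnorm_le1 (B j), (B j)^T = B j, ys j = bin n j * B j 0 0,
         ys (n - j)%N = bin n j * B j 1 1 & \det (B j) = q]) <-> tetra_pairs.
Proof.
split=> [[B hB] j hj | h]; last by exists pair_matrix => j; apply: pairs_sym_contraction.
by have [h1 _ h3 h4 h5] := hB j hj; exact: contraction_pair h3 h4 h5.
Qed.

Hypothesis hn : (2 <= n)%N.

Lemma one_le_half : (1 <= 1 <= n./2)%N.
Proof. by move: hn; case: n => [|[|m]]. Qed.

Lemma pairs_iff6 :
  (`|q| <= 1 /\
   forall j, (1 <= j <= n./2)%N ->
     `|ys j| ^+ 2 + `|ys (n - j)%N| ^+ 2 - bin n j ^+ 2 * `|q| ^+ 2
       + 2 * `|ys j * ys (n - j)%N - bin n j ^+ 2 * q| <= bin n j ^+ 2) <->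
  tetra_pairs.
Proof.
split=> [[q1 h] j hj | h].
  have := h j hj; have hjn := le_half_n hj; have [-> ->] := ys_scaled hjn.
  by rewrite (scale6 (bin_gt0C hjn)).
split=> [|j hj]; first by case: (h 1%N one_le_half).
have hjn := le_half_n hj; have [-> ->] := ys_scaled hjn.
by rewrite (scale6 (bin_gt0C hjn)); case: (h j hj).
Qed.

Lemma pairs_iff10 :
  (`|q| <= 1 /\
   exists beta : nat -> C, forall j, (1 <= j <= n./2)%N ->
     [/\ ys j = beta j + (beta (n - j)%N)^* * q,
         ys (n - j)%N = beta (n - j)%N + (beta j)^* * q &
         `|beta j| + `|beta (n - j)%N| <= bin n j]) <-> tetra_pairs.
Proof.
split=> [[q1 [beta hb]] j hj | h].
  have hjn := le_half_n hj; have hc := bin_gt0C hjn; have [f1 f2] := ys_scaled hjn.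
  have [e1 e2 e3] := hb j hj.
  apply/tetrablock_iff10; split=> //; exists (beta j / bin n j), (beta (n - j)%N / bin n j).
  set b1 := beta j / _; set b2 := beta _ / _.
  have eb1 : beta j = bin n j * b1 by rewrite /b1 mulrC divfK ?bin_neq0.
  have eb2 : beta (n - j)%N = bin n j * b2 by rewrite /b2 mulrC divfK ?bin_neq0.
  rewrite eb1 eb2 !(normr_scale hc) -mulrDr -{2}[bin n j]mulr1 ler_pM2l // in e3.
  split; last exact: e3.
    by apply: (mulfI (bin_neq0 hjn)); rewrite -f1 e1 eb1 eb2 (conj_scale hc); ring.
  by apply: (mulfI (bin_neq0 hjn)); rewrite -f2 e2 eb1 eb2 (conj_scale hc); ring.
split; first by have [] := h 1%N one_le_half.
exists (fun k => bin n k * param_beta (x1_at k) (x2_at k) q) => j hj.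
have hjn := le_half_n hj; have hc := bin_gt0C hjn; have [f1 f2] := ys_scaled hjn.
have [s1 s2] := x_at_sub hjn; rewrite (bin_sub_n hjn) s1 s2 !(conj_scale hc).
have /tetrablock_iff7/tetra7_param := h j hj.
set b1 := param_beta _ _ _; set b2 := param_beta _ _ _ => -[g1 g2 g3].
split; last by rewrite !(normr_scale hc) -mulrDr -{2}[bin n j]mulr1 ler_pM2l.
  by rewrite f1 g1; ring.
by rewrite f2 g2; ring.
Qed.
End NormalisedPairs.

Section ScaledSchur.
Variable R : realType.
Local Open Scope complex_scope.
Local Open Scope ring_scope.
Local Notation C := R[i].
Local Notation normc := (@Normc.normc R).

Definition scaled_schur (c : R) (a b q : C) : Prop :=
  normc b <= c /\
  forall w : C, disc w -> normc (a - c%:C * q * w) <= normc (c%:C - b * w).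

Lemma tetra_schur_scaled (c : R) (a b q : C) : 0 < c ->
  tetra_schur (a / c%:C) (b / c%:C) q <-> scaled_schur c a b q.
Proof.
move=> c0; have cC : c%:C != 0 :> C by rewrite -normc_eq0 normc_real gtr0_norm ?gt_eqF.
have normc_div (u : C) : normc (u / c%:C) = normc u / c.
  by rewrite Normc.normcM Normc.normcV normc_real gtr0_norm.
have e1 w : a / c%:C - q * w = (a - c%:C * q * w) / c%:C by field.
have e2 w : 1 - b / c%:C * w = (c%:C - b * w) / c%:C by field.
rewrite /tetra_schur /scaled_schur normc_le1 normc_div ler_pdivrMr // mul1r.
split=> -[h1 h2]; split=> // w hw; have := h2 w hw.
  by rewrite ler_normc e1 e2 !normc_div ler_pM2r ?invr_gt0.
by rewrite ler_normc e1 e2 !normc_div ler_pM2r ?invr_gt0.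
Qed.

Lemma scaled_schur_closed (c : R) (a b q : C) : 0 < c ->
  (forall e, 0 < e -> exists a' b' q' : C,
     [/\ normc (a - a') < e, normc (b - b') < e, normc (q - q') < e
       & scaled_schur c a' b' q']) ->
  scaled_schur c a b q.
Proof.
move=> c0 approx; split.
  apply/ler_addgt0Pr => e e0; have [a' [b' [q' [_ hb _ [hb' _]]]]] := approx e e0.
  by have [] := lerB_normc b b'; lra.
move=> w hw; have w1 : normc w < 1 by rewrite -normc_lt1.
have w0 := normc_ge0 w.
apply/ler_addgt0Pr => e e0; have e'0 : 0 < e / (2 + c) by rewrite divr_gt0 //; lra.
have [a' [b' [q' [ha hb hq [_ hS]]]]] := approx _ e'0.
have := hS w hw.
have t1 := le_normcD (a' - c%:C * q' * w) ((a - a') - c%:C * (q - q') * w).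
have t2 := le_normcD ((a - a')) (- (c%:C * (q - q') * w)).
have t3 := le_normcD (c%:C - b * w) ((b - b') * w).
rewrite normcN !Normc.normcM normc_real gtr0_norm // in t2.
rewrite Normc.normcM in t3.
rewrite (_ : a' - c%:C * q' * w + (a - a' - c%:C * (q - q') * w) = a - c%:C * q * w) in t1;
  last by ring.
rewrite (_ : c%:C - b * w + (b - b') * w = c%:C - b' * w) in t3; last by ring.
have : c * normc (q - q') * normc w <= c * (e / (2 + c)).
  by rewrite -mulrA ler_wpM2l ?ltW //; nra.
have : normc (b - b') * normc w <= e / (2 + c).
  by have := normc_ge0 (b - b'); nra.
have : (2 + c) * (e / (2 + c)) = e by rewrite mulrC divfK //; lra.
lra.
Qed.

End ScaledSchur.

Section GammaTilde.
Variable R : realType.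
Local Open Scope complex_scope.
Local Open Scope ring_scope.
Local Notation C := R[i].
Local Notation normc := (@Normc.normc R).
Variables (n : nat) (hn : (2 <= n)%N).

Lemma shrink_dist (b1 b2 q : C) (t : R) :
  0 <= t <= 1 -> `|q| <= 1 ->
  normc (b1 + b2^* * q - (t%:C * b1 + (t%:C * b2)^* * (t%:C * q)))
    <= 2 * (1 - t) * (normc b1 + normc b2).
Proof.
case/andP=> t0 t1 q1.
have -> : b1 + b2^* * q - (t%:C * b1 + (t%:C * b2)^* * (t%:C * q))
          = (1 - t)%:C * b1 + (1 - t ^+ 2)%:C * (b2^* * q).
  by rewrite rmorphM /= conj_real !rmorphB rmorphXn /= rmorph1; ring.
apply: le_trans (le_normcD _ _) _; rewrite !Normc.normcM !normc_real normc_conj.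
rewrite !ger0_norm ?subr_ge0 ?expr_le1 //; rewrite normc_le1 in q1.
have [nb1 nb2] := (normc_ge0 b1, normc_ge0 b2).
have T0 : 0 <= 1 - t ^+ 2 by rewrite subr_ge0 expr_le1.
have := ler_wpM2l T0 (ler_piMr nb2 q1).
have : 0 <= (1 - t) ^+ 2 * normc b2 by rewrite mulr_ge0 ?sqr_ge0.
have : 0 <= (1 - t) * normc b1 by rewrite mulr_ge0 ?subr_ge0.
nra.
Qed.

Lemma bin_realC j : bin n j = ((('C(n, j))%:R : R)%:C : C).
Proof. by rewrite /bin rmorph_nat. Qed.

Lemma bin_le_fact j : (j <= n)%N -> ('C(n, j) <= n`!)%N.
Proof. by move=> hj; rewrite -(bin_fact hj) leq_pmulr // muln_gt0 !fact_gt0. Qed.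

Lemma Gt_tetra_pairs (ys : nat -> C) (q : C) : Gt n ys q -> tetra_pairs n ys q.
Proof.
move=> [q1 [beta hb]]; apply/(@pairs_iff10 _ n ys q hn); split; first exact: ltW.
exists beta => j /andP[j1 jh].
have [e1 e3] := hb j (ltac:(apply/andP; split; lia)).
have [e2 _] := hb (n - j)%N (ltac:(apply/andP; split; lia)).
by rewrite subKn in e2; [split=> //; exact: ltW | lia].
Qed.

Lemma Gammat_tetra_pairs (ys : nat -> C) (q : C) : Gammat n ys q -> tetra_pairs n ys q.
Proof.
move=> hG j hj; have hjn := le_half_n hj.
set c : R := ('C(n, j))%:R; have c0 : 0 < c by rewrite ltr0n bin_gt0.
apply/tetrablock_iff5/schur_tetra5; rewrite /x1_at /x2_at bin_realC.
apply/(tetra_schur_scaled _ _ _ c0)/(scaled_schur_closed c0) => e e0.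
have [ys' [q' [hGt [hq hy]]]] := hG e e0.
have jn1 : (1 <= j <= n.-1)%N by case/andP: hj => ? ?; apply/andP; split; lia.
have njn1 : (1 <= n - j <= n.-1)%N by case/andP: hj => ? ?; apply/andP; split; lia.
exists (ys' j), (ys' (n - j)%N), q'; split; [exact: hy | exact: hy | exact: hq |].
have /tetrablock_nonvanishing/nonvanishing_schur := Gt_tetra_pairs hGt hj.
by rewrite /x1_at /x2_at bin_realC => /(tetra_schur_scaled _ _ _ c0).
Qed.

(* Shrink the parameters by t = 1 - d: this gives points of \tilde G_n at
   distance at most 2 d n! from y. *)
Lemma tetra_pairs_Gammat (ys : nat -> C) (q : C) : tetra_pairs n ys q -> Gammat n ys q.
Proof.
move=> /(@pairs_iff10 _ n ys q hn) [q1 [beta /param_all_indices hb]] e e0.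
pose M : R := (n`!)%:R; have M0 : 0 <= M by rewrite ler0n.
pose d := e / (e + 2 * M + 2); have den0 : 0 < e + 2 * M + 2 by lra.
have d0 : 0 < d by rewrite divr_gt0.
have dd : d * (e + 2 * M + 2) = e by rewrite divfK ?gt_eqF.
have d1 : d < 1 by rewrite ltr_pdivrMr // mul1r; lra.
exists (fun k => (1 - d)%:C * beta k + ((1 - d)%:C * beta (n - k)%N)^* * ((1 - d)%:C * q)).
exists ((1 - d)%:C * q); split; last split.
- by apply: Gt_shrink => [|//|j /hb[]//]; apply/andP; split; lra.
- rewrite (_ : q - (1 - d)%:C * q = d%:C * q); last by rewrite rmorphB rmorph1; ring.
  rewrite Normc.normcM normc_real gtr0_norm //; rewrite normc_le1 in q1.
  by have := normc_ge0 q; nra.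
move=> j hj; have [-> hbj] := hb j hj.
have hjn : (j <= n)%N by case/andP: hj; lia.
apply: le_lt_trans (shrink_dist _ _ _ q1) _; first by apply/andP; split; lra.
move: hbj; rewrite bin_realC !normr_normc -rmorphD lecR => hbj.
have : ('C(n, j))%:R <= M :> R by rewrite ler_nat bin_le_fact.
have := normc_ge0 (beta j); have := normc_ge0 (beta (n - j)%N); nra.
Qed.

Lemma Gammat_iff_tetra_pairs (ys : nat -> C) (q : C) :
  Gammat n ys q <-> tetra_pairs n ys q.
Proof. by split; [exact: Gammat_tetra_pairs | exact: tetra_pairs_Gammat]. Qed.

End GammaTilde.

Unset Implicit Arguments. Set Strict Implicit.

Theorem mainTheorem3 (R : realType) (n : nat) (hn : (2 <= n)%N)
    (ys : nat -> R[i]) (q : R[i]) :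
  [<->
  (* (1) *)
  Gammat n ys q;
  (* (2) *)
  (forall j, (1 <= j <= n./2)%N -> forall z w : R[i], disc z -> disc w ->
     bin n j - ys j * z - ys (n - j)%N * w + bin n j * q * z * w != 0);
  (* (3) *)
  (forall j, (1 <= j <= n./2)%N ->
     (Hinf_norm n j ys q <= 1)%E /\
     (ys j * ys (n - j)%N = bin n j ^+ 2 * q -> `|ys (n - j)%N| <= bin n j));
  (* (3') *)
  (forall j, (1 <= j <= n./2)%N ->
     (Hinf_norm n (n - j) ys q <= 1)%E /\
     (ys j * ys (n - j)%N = bin n j ^+ 2 * q -> `|ys j| <= bin n j));
  (* (4) *)
  (forall j, (1 <= j <= n./2)%N ->
     bin n j * `|ys j - (ys (n - j)%N)^* * q| + `|ys j * ys (n - j)%N - bin n j ^+ 2 * q|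
       <= bin n j ^+ 2 - `|ys (n - j)%N| ^+ 2 /\
     (ys j * ys (n - j)%N = bin n j ^+ 2 * q -> `|ys j| <= bin n j));
  (* (4') *)
  (forall j, (1 <= j <= n./2)%N ->
     bin n j * `|ys (n - j)%N - (ys j)^* * q| + `|ys j * ys (n - j)%N - bin n j ^+ 2 * q|
       <= bin n j ^+ 2 - `|ys j| ^+ 2 /\
     (ys j * ys (n - j)%N = bin n j ^+ 2 * q -> `|ys (n - j)%N| <= bin n j));
  (* (5) *)
  (forall j, (1 <= j <= n./2)%N ->
     `|ys j| ^+ 2 - `|ys (n - j)%N| ^+ 2 + bin n j ^+ 2 * `|q| ^+ 2
       + 2 * bin n j * `|ys (n - j)%N - (ys j)^* * q| <= bin n j ^+ 2 /\
     `|ys (n - j)%N| <= bin n j);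
  (* (5') *)
  (forall j, (1 <= j <= n./2)%N ->
     `|ys (n - j)%N| ^+ 2 - `|ys j| ^+ 2 + bin n j ^+ 2 * `|q| ^+ 2
       + 2 * bin n j * `|ys j - (ys (n - j)%N)^* * q| <= bin n j ^+ 2 /\
     `|ys j| <= bin n j);
  (* (6) *)
  (`|q| <= 1 /\
   forall j, (1 <= j <= n./2)%N ->
     `|ys j| ^+ 2 + `|ys (n - j)%N| ^+ 2 - bin n j ^+ 2 * `|q| ^+ 2
       + 2 * `|ys j * ys (n - j)%N - bin n j ^+ 2 * q| <= bin n j ^+ 2);
  (* (7) *)
  ((forall j, (1 <= j <= n./2)%N ->
     `|ys (n - j)%N - (ys j)^* * q| + `|ys j - (ys (n - j)%N)^* * q|
       <= bin n j * (1 - `|q| ^+ 2)) /\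
   (`|q| = 1 -> forall j, (1 <= j <= n./2)%N -> `|ys j| <= bin n j));
  (* (8) *)
  (exists B : nat -> 'M[R[i]]_2, forall j, (1 <= j <= n./2)%N ->
     [/\ opnorm_le1 (B j), ys j = bin n j * B j 0 0,
         ys (n - j)%N = bin n j * B j 1 1 & \det (B j) = q]);
  (* (9) *)
  (exists B : nat -> 'M[R[i]]_2, forall j, (1 <= j <= n./2)%N ->
     [/\ opnorm_le1 (B j), (B j)^T = B j, ys j = bin n j * B j 0 0,
         ys (n - j)%N = bin n j * B j 1 1 & \det (B j) = q]);
  (* (10) *)
  (`|q| <= 1 /\
   exists beta : nat -> R[i], forall j, (1 <= j <= n./2)%N ->
     [/\ ys j = beta j + (beta (n - j)%N)^* * q,
         ys (n - j)%N = beta (n - j)%N + (beta j)^* * q &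
         `|beta j| + `|beta (n - j)%N| <= bin n j])
  ].
Proof.
have s1 := Gammat_iff_tetra_pairs hn ys q.
have s2 := tetra_pairsP (@pair_iff2 R n ys q).
have s3 := tetra_pairsP (@pair_iff3 R n ys q).
have s3' := tetra_pairsP (@pair_iff3' R n ys q).
have s4 := tetra_pairsP (@pair_iff4 R n ys q).
have s4' := tetra_pairsP (@pair_iff4' R n ys q).
have s5 := tetra_pairsP (@pair_iff5 R n ys q).
have s5' := tetra_pairsP (@pair_iff5' R n ys q).
have s6 := @pairs_iff6 R n ys q hn; have s7 := @pairs_iff7 R n ys q.
have s8 := @pairs_iff8 R n ys q; have s9 := @pairs_iff9 R n ys q.
have s10 := @pairs_iff10 R n ys q hn.
tfae.
- by move/s1/s2.
- by move/s2/s3.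
- by move/s3/s3'.
- by move/s3'/s4.
- by move/s4/s4'.
- by move/s4'/s5.
- by move/s5/s5'.
- by move/s5'/s6.
- by move/s6/s7.
- by move/s7/s8.
- by move/s8/s9.
- by move/s9/s10.
- by move/s10/s1.
Qed.
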